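(* Let $T$ be a tree with $\sigma(T)=\tau_{\mathrm{ind}}(T)$, and let $I\subseteq V(T)$ be a minimum independent vertex cover of $T$. Suppose $T$ has a critical edge. Then there exists a pendant edge $e^{\ast}\in T$ whose leaf endpoint is contained in $I$ such that $\sigma(T\setminus e^{\ast})\le\sigma(T)-1$.
   Context: For a graph $F$, $|F|$ is its number of edges and $F-I$ the subgraph induced on $V(F)\setminus I$. The crosscut number is $\sigma(F)=\min\{|I|+|F-I| : I\text{ independent in }F\}$. For bipartite $F$, $\tau_{\mathrm{ind}}(F)$ is the minimum size of $S\subseteq V(F)$ with $|S\cap e|=1$ for every edge $e$; a minimum independent vertex cover is an independent set meeting every edge, of minimum size among such sets. For an edge $e$, $T\setminus e$ is $T$ with edge $e$ deleted (vertices kept); $e$ is critical if $\sigma(T\setminus e)\le\sigma(T)-1$. A pendant edge is an edge with an endpoint of degree $1$ (a leaf). *)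

From mathcomp Require Import all_boot.
Set Implicit Arguments. Unset Strict Implicit. Unset Printing Implicit Defensive.

(* A simple graph on a finite vertex type V is a symmetric irreflexive
   relation g : rel V.  Edges are the 2-element vertex sets {u,v} with g u v. *)

Section Graphs.
Variable V : finType.

Definition edges (g : rel V) : {set {set V}} :=
  [set A : {set V} | [exists u, exists v, g u v && (A == [set u; v])]].

Definition nedges (g : rel V) : nat := #|edges g|.

Definition independent (g : rel V) (I : {set V}) : bool :=
  [forall u in I, forall v in I, ~~ g u v].

Definition nedges_outside (g : rel V) (I : {set V}) : nat :=
  #|[set A in edges g | [disjoint A & I]]|.

(* crosscut number sigma(F) = min { |I| + |F - I| : I independent }.
   The empty set is independent with value nedges g, so the default
   nedges g of the iterated min does not affect the value. *)
Definition sigma (g : rel V) : nat :=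
  \big[minn/nedges g]_(I : {set V} | independent g I) (#|I| + nedges_outside g I).

Definition exact_transversal (g : rel V) (S : {set V}) : bool :=
  [forall A in edges g, #|S :&: A| == 1].

(* tau_ind(F) = min |S| with |S ∩ e| = 1 for every edge e (F bipartite;
   default #|V| is irrelevant whenever such an S exists). *)
Definition tau_ind (g : rel V) : nat :=
  \big[minn/#|V|]_(S : {set V} | exact_transversal g S) #|S|.

Definition ind_vertex_cover (g : rel V) (I : {set V}) : bool :=
  independent g I && [forall A in edges g, ~~ [disjoint A & I]].

Definition min_ind_vertex_cover (g : rel V) (I : {set V}) : Prop :=
  ind_vertex_cover g I /\
  forall J : {set V}, ind_vertex_cover g J -> #|I| <= #|J|.

Definition del_edge (g : rel V) (A : {set V}) : rel V :=
  fun x y => g x y && ([set x; y] != A).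

Definition critical (g : rel V) (A : {set V}) : Prop :=
  A \in edges g /\ sigma (del_edge g A) + 1 <= sigma g.

Definition deg (g : rel V) (x : V) : nat := #|[set y | g x y]|.

Definition connected (g : rel V) : Prop := forall x y : V, connect g x y.

Definition acyclic (g : rel V) : Prop :=
  forall c : seq V, uniq c -> cycle g c -> size c < 3.

Definition is_tree (g : rel V) : Prop :=
  [/\ symmetric g, irreflexive g, 0 < #|V|, connected g & acyclic g].

End Graphs.

From mathcomp Require Import all_boot zify.
Set Implicit Arguments. Unset Strict Implicit. Unset Printing Implicit Defensive.

(* Exact transversals are independent vertex covers and I covers every edge, so
   sigma(T) <= |I| <= tau_ind(T) = sigma(T).  If a leaf x lies in I, deleting its
   pendant edge leaves I \ {x} independent and covering all remaining edges, so
   sigma drops.  Otherwise every vertex of I has degree at least 2, and no edge uv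
   with u in I is critical: for J independent in T \ uv, at least 2|I \ J| - 1 arcs
   leave I \ J; those ending in J are distinct edges of the forest induced on
   (I \ J) ∪ (J \ I), hence fewer than |I \ J| + |J \ I|, and the others are
   distinct edges missing J.  Thus |I| <= |J| + |(T \ uv) - J|. *)

Lemma bigminn_le_cond (I : finType) (P : pred I) (F : I -> nat) d i :
  P i -> \big[minn/d]_(j | P j) F j <= F i.
Proof.
move=> Pi; suff : forall r, i \in r -> \big[minn/d]_(j <- r | P j) F j <= F i.
  by apply; rewrite mem_index_enum.
elim=> // x r IH; rewrite inE big_cons => /orP [/eqP <-|ir].
  by rewrite Pi geq_minl.
by case: (P x); rewrite ?geq_min IH ?orbT.
Qed.

Lemma le_bigminn (I : finType) (P : pred I) (F : I -> nat) d k :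
  k <= d -> (forall j, P j -> k <= F j) -> k <= \big[minn/d]_(j | P j) F j.
Proof. by move=> kd kF; elim/big_ind: _ => // a b ka kb; rewrite leq_min ka kb. Qed.

Lemma disjoint_pair (T : finType) (a b : T) (A : {set T}) :
  [disjoint [set a; b] & A] = (a \notin A) && (b \notin A).
Proof.
rewrite disjoints_subset; apply/subsetP/andP => [H | [aA bA] x].
  by split; rewrite -in_setC H // !inE eqxx ?orbT.
by rewrite !inE => /orP [] /eqP ->; rewrite ?aA ?bA.
Qed.

Section Crosscut.
Variables (V : finType) (g : rel V).

Lemma edgesP (A : {set V}) :
  reflect (exists a b, g a b /\ A = [set a; b]) (A \in edges g).
Proof.
rewrite inE; apply: (iffP existsP) => [[a /existsP [b /andP [gab /eqP ->]]] | [a [b [gab ->]]]].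
  by exists a, b.
by exists a; apply/existsP; exists b; rewrite gab eqxx.
Qed.

Lemma edge_pair a b : g a b -> [set a; b] \in edges g.
Proof. by move=> gab; apply/edgesP; exists a, b. Qed.

Lemma independentP (I : {set V}) :
  reflect {in I &, forall a b, ~~ g a b} (independent g I).
Proof.
apply: (iffP forall_inP) => [H a b aI | H a aI]; first exact: (forall_inP (H a aI)).
by apply/forall_inP => b; apply: H.
Qed.

Lemma independent0 : independent g set0.
Proof. by apply/independentP => a b; rewrite inE. Qed.

Lemma coversP (I : {set V}) :
  reflect (forall a b, g a b -> (a \in I) || (b \in I))
          [forall A in edges g, ~~ [disjoint A & I]].
Proof.
apply: (iffP forall_inP) => [H a b gab | H A /edgesP [a [b [gab ->]]]].
  by move: (H [set a; b]); rewrite disjoint_pair negb_and !negbK; apply; apply/edgesP; exists a, b.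
by rewrite disjoint_pair negb_and !negbK; apply: H.
Qed.

Lemma ind_vertex_coverP (I : {set V}) :
  reflect ({in I &, forall a b, ~~ g a b} /\ forall a b, g a b -> (a \in I) || (b \in I))
          (ind_vertex_cover g I).
Proof.
by apply: (iffP andP) => [[/independentP ? /coversP ?] | [/independentP ? /coversP ?]].
Qed.

Lemma deg1P x : deg g x = 1 -> exists2 y, g x y & forall z, g x z -> z = y.
Proof.
move=> /eqP /cards1P [y xN]; exists y => [|z]; first by have := set11 y; rewrite -xN inE.
by move=> gxz; apply/set1P; rewrite -xN inE.
Qed.

Lemma connected_deg_gt0 u v a :
  connected g -> g u v -> 0 < deg g a.
Proof.
move=> g_conn guv; rewrite /deg card_gt0; apply/set0Pn.
have [-> | au] := eqVneq a u; first by exists v; rewrite inE.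
have /connectP [[|c p] /= ap au'] := g_conn a u; first by rewrite au' eqxx in au.
by exists c; rewrite inE; case/andP: ap.
Qed.

Lemma nedges_outside0 : nedges_outside g set0 = nedges g.
Proof. by apply: eq_card => A; rewrite inE -setI_eq0 setI0 eqxx andbT. Qed.

Lemma nedges_outside_cover (I : {set V}) :
  (forall a b, g a b -> (a \in I) || (b \in I)) -> nedges_outside g I = 0.
Proof.
move=> Icov; apply: eq_card0 => A; rewrite inE.
by apply/andP => -[/edgesP [a [b [gab ->]]]]; rewrite disjoint_pair -negb_or Icov.
Qed.

Lemma sigma_le (I : {set V}) :
  independent g I -> sigma g <= #|I| + nedges_outside g I.
Proof. exact: bigminn_le_cond. Qed.

Lemma le_sigma k :
  (forall J, independent g J -> k <= #|J| + nedges_outside g J) -> k <= sigma g.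
Proof.
move=> kJ; apply: le_bigminn => //.
by have := kJ _ independent0; rewrite cards0 nedges_outside0.
Qed.

Lemma sigma_le_cover (I : {set V}) : ind_vertex_cover g I -> sigma g <= #|I|.
Proof.
move=> /ind_vertex_coverP [Iind Icov].
by rewrite -[#|I|]addn0 -(nedges_outside_cover Icov) sigma_le //; apply/independentP.
Qed.

Hypothesis g_irr : irreflexive g.

Lemma exact_transversal_cover (S : {set V}) :
  exact_transversal g S -> ind_vertex_cover g S.
Proof.
move=> /forall_inP St; apply/ind_vertex_coverP; split => [a b aS bS | a b gab].
  apply/negP => gab; have /eqP := St _ (edge_pair gab).
  suff -> : S :&: [set a; b] = [set a; b].
    by rewrite cards2; case: eqVneq gab => // ->; rewrite g_irr.
  by apply/setIidPr/subsetP => x; rewrite !inE => /orP [] /eqP ->.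
have : 0 < #|S :&: [set a; b]| by rewrite (eqP (St _ (edge_pair gab))).
by rewrite card_gt0 => /set0Pn [x]; rewrite !inE => /andP [xS /orP [] /eqP <-]; rewrite xS ?orbT.
Qed.

Lemma min_ind_vertex_cover_le_tau_ind (I : {set V}) :
  min_ind_vertex_cover g I -> #|I| <= tau_ind g.
Proof.
move=> [_ Imin]; apply: le_bigminn => [|S /exact_transversal_cover]; last exact: Imin.
exact: max_card.
Qed.

Lemma sigma_min_ind_vertex_cover (I : {set V}) :
  sigma g = tau_ind g -> min_ind_vertex_cover g I -> sigma g = #|I|.
Proof.
move=> sigma_tau Imin; apply/eqP; rewrite eqn_leq sigma_le_cover; last exact: Imin.1.
by rewrite sigma_tau min_ind_vertex_cover_le_tau_ind.
Qed.

End Crosscut.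

Section DeleteEdge.
Variables (V : finType) (g : rel V).
Hypotheses (g_sym : symmetric g) (g_irr : irreflexive g) (g_acyc : acyclic g).

Lemma del_edge_sub A : subrel (del_edge g A) g.
Proof. by move=> x y /andP []. Qed.

Lemma del_edge_sym A : symmetric (del_edge g A).
Proof. by move=> x y; rewrite /del_edge g_sym setUC. Qed.

Lemma del_edge_irr A : irreflexive (del_edge g A).
Proof. by move=> x; rewrite /del_edge g_irr. Qed.

Lemma del_edge_acyclic A : acyclic (del_edge g A).
Proof. by move=> c uc /(sub_cycle (@del_edge_sub A)); apply: g_acyc. Qed.

Lemma sigma_del_pendant_edge (I : {set V}) x y :
  ind_vertex_cover g I -> x \in I -> deg g x = 1 -> g x y ->
  sigma (del_edge g [set x; y]) + 1 <= #|I|.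
Proof.
move=> /ind_vertex_coverP [Iind Icov] xI /deg1P [y' _ xN] gxy.
have yy' := xN y gxy; subst y'.
set F := del_edge g [set x; y].
have Find : independent F (I :\ x).
  apply/independentP => a b /setD1P [_ aI] /setD1P [_ bI].
  exact: contra (@del_edge_sub _ a b) (Iind a b aI bI).
have Fcov : forall a b, F a b -> (a \in I :\ x) || (b \in I :\ x).
  move=> a b Fab; wlog aI : a b Fab / a \in I.
    move=> H; have /andP [/Icov /orP [aI | bI] _] := Fab; first exact: H.
    by rewrite orbC; apply: H bI; rewrite /F del_edge_sym.
  rewrite !inE aI andbT; apply/orP; left; apply: contraTneq Fab => ax.
  by rewrite /F /del_edge ax; case: (boolP (g x b)) => // /xN ->; rewrite eqxx.
have := sigma_le Find; rewrite (nedges_outside_cover Fcov) addn0.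
by rewrite (cardsD1 x I) xI addn1 add1n ltnS.
Qed.

End DeleteEdge.

Definition induced_edges (V : finType) (h : rel V) (X : {set V}) : {set {set V}} :=
  [set E in edges h | E \subset X].

Lemma in_induced_edges (V : finType) (h : rel V) (X E : {set V}) :
  (E \in induced_edges h X) = (E \in edges h) && (E \subset X).
Proof. by rewrite [in LHS]inE. Qed.

Section Forest.
Variables (V : finType) (h : rel V).
Hypotheses (h_sym : symmetric h) (h_irr : irreflexive h) (h_acyc : acyclic h).

Lemma acyclic_fresh_neighbour x p w :
  uniq (x :: p) -> path h x p -> h x w -> w != head x p -> w \notin x :: p.
Proof.
move=> up pp hxw wne; rewrite in_cons negb_or; apply/andP; split.
  by apply: contraTneq hxw => ->; rewrite h_irr.
apply/negP => wp; case/splitPr: wp up pp wne => p1 p2 up pp wne.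
case: p1 up pp wne => [|y p1] up pp wne; first by rewrite eqxx in wne.
have uc : uniq (x :: rcons (y :: p1) w).
  by move: up; rewrite -cat_rcons -cat_cons cat_uniq => /andP [].
have cc : cycle h (x :: rcons (y :: p1) w).
  rewrite /cycle rcons_path last_rcons (h_sym w x) hxw andbT rcons_path.
  by move: pp; rewrite cat_path => /andP [-> /=] /andP [].
by have := h_acyc uc cc; rewrite /= size_rcons.
Qed.

Lemma low_degree_vertex (X : {set V}) :
  X != set0 -> exists2 x, x \in X & #|[set y in X | h x y]| <= 1.
Proof.
move=> /set0Pn [x0 x0X]; apply/exists_inP; apply: contraT => /exists_inPn deg2.
have long_path n : exists x p, [/\ x \in X, uniq (x :: p), path h x p & n < size (x :: p)].
  elim: n => [|n [x [p [xX up pp szp]]]]; first by exists x0, [::].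
  have [w /setIdP [wX hxw] wne] : exists2 w, w \in [set y in X | h x y] & w != head x p.
    apply/exists_inP; apply: contraR (deg2 x xX) => /exists_inPn N1.
    rewrite -(cards1 (head x p)); apply/subset_leq_card/subsetP => y /N1.
    by rewrite negbK inE.
  exists w, (x :: p); split => //; last by rewrite /= h_sym hxw.
  by rewrite cons_uniq up andbT acyclic_fresh_neighbour.
have [x [p [_ up _]]] := long_path #|V|.
by rewrite ltnNge -(card_uniqP up) max_card.
Qed.

Lemma induced_edges_setD1 (X : {set V}) x :
  induced_edges h X \subset
    induced_edges h (X :\ x) :|: (fun y => [set x; y]) @: [set y in X | h x y].
Proof.
apply/subsetP => E; rewrite in_setU !in_induced_edges.
move=> /andP [/[dup] Eh /edgesP [a [b [hab Eab]]] EX].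
have [xE | xE] := boolP (x \in E); last first.
  rewrite Eh /=; apply/orP; left; apply/subsetP => z zE.
  by rewrite !inE (subsetP EX) // andbT; apply: contraNneq xE => <-.
apply/orP; right; apply/imsetP; move: xE; rewrite Eab !inE => /orP [] /eqP ->.
  by exists b; rewrite // !inE hab andbT (subsetP EX) // Eab !inE eqxx orbT.
by exists a; rewrite 1?setUC // !inE h_sym hab andbT (subsetP EX) // Eab !inE eqxx.
Qed.

Lemma card_induced_edges (X : {set V}) : #|induced_edges h X| <= #|X| - 1.
Proof.
move: {2}#|X| (leqnn #|X|) => n; elim: n X => [|n IH] X.
  rewrite leqn0 cards_eq0 => /eqP ->; rewrite cards0 leqn0 cards_eq0; apply/eqP/setP => E.
  rewrite in_induced_edges in_set0; apply/negbTE/andP => -[/edgesP [a [b [_ ->]]]].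
  by move=> /subsetP /(_ a); rewrite !inE eqxx => /(_ isT).
have [-> _ | Xne szX] := eqVneq X set0; first by apply: IH; rewrite cards0.
have [x xX xdeg] := low_degree_vertex Xne.
have cX : #|X| = #|X :\ x| + 1 by rewrite (cardsD1 x X) xX addnC.
have /IH IHx : #|X :\ x| <= n by move: szX; rewrite cX addn1 ltnS.
set N := [set y in X | h x y] in xdeg *.
have xN : N \subset X :\ x.
  apply/subsetP => y; rewrite !inE => /andP [-> hxy]; rewrite andbT.
  by apply: contraTneq hxy => ->; rewrite h_irr.
have : #|induced_edges h X| <= #|induced_edges h (X :\ x)| + #|N|.
  apply: leq_trans (subset_leq_card (induced_edges_setD1 X x)) _.
  by apply: leq_trans (leq_card_setU _ _).1 _; rewrite leq_add2l leq_imset_card.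
have := subset_leq_card xN; move: cX xdeg IHx; lia.
Qed.

End Forest.

Definition arcs (V : finType) (F : rel V) (A : {set V}) : {set V * V} :=
  [set p | (p.1 \in A) && F p.1 p.2].

Section ArcCounting.
Variables (V : finType) (F : rel V).

Lemma card_arcs (A : {set V}) : #|arcs F A| = \sum_(a in A) deg F a.
Proof.
rewrite -sum1_card; under [RHS]eq_bigr => a _ do rewrite /deg -sum1_card.
by rewrite pair_big_dep; apply: eq_bigl => -[a b]; rewrite !inE.
Qed.

Lemma card_arcs_le_edges (I : {set V}) (P : {set V * V}) (Q : pred {set V}) :
  (forall p, p \in P -> [/\ p.1 \in I, p.2 \notin I, F p.1 p.2 & Q [set p.1; p.2]]) ->
  #|P| <= #|[set E in edges F | Q E]|.
Proof.
move=> HP; rewrite -(card_in_imset (f := fun p => [set p.1; p.2])).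
  apply/subset_leq_card/subsetP => _ /imsetP [p /HP [_ _ Fp Qp] ->].
  by rewrite inE Qp andbT edge_pair.
move=> [a b] [a' b'] /HP [/= aI bI _ _] /HP [/= a'I b'I _ _] e.
have : a \in [set a'; b'] by rewrite -e set21.
rewrite !inE => /orP [] /eqP aa'; last by move: b'I; rewrite -aa' aI.
have : b \in [set a'; b'] by rewrite -e set22.
by rewrite !inE -aa' => /orP [] /eqP bb'; [move: bI; rewrite bb' aI | rewrite aa' bb'].
Qed.

End ArcCounting.

Section ForestArcs.
Variables (V : finType) (F : rel V).
Hypotheses (F_sym : symmetric F) (F_irr : irreflexive F) (F_acyc : acyclic F).

Lemma sum_deg_setD_le (I J : {set V}) :
  independent F I ->
  \sum_(a in I :\: J) deg F a <= #|I :\: J| + #|J :\: I| - 1 + nedges_outside F J.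
Proof.
move=> /independentP Iind.
have notI a b : a \in I -> F a b -> b \notin I.
  by move=> aI; apply: contraL => bI; apply: Iind.
set Jp := [set p : V * V | p.2 \in J].
have inJ : #|arcs F (I :\: J) :&: Jp| <= #|I :\: J| + #|J :\: I| - 1.
  have -> : #|I :\: J| + #|J :\: I| = #|(I :\: J) :|: (J :\: I)|.
    rewrite cardsU (_ : _ :&: _ = set0) ?cards0 ?subn0 //.
    by apply/setP => z; rewrite !inE; case: (z \in I); case: (z \in J).
  apply: leq_trans (card_induced_edges F_sym F_irr F_acyc _).
  apply: (card_arcs_le_edges (I := I)) => -[a b]; rewrite !inE /=.
  move=> /andP [/andP [/andP [aJ aI] Fab] bJ]; split; rewrite ?(notI a) //.
  by apply/subsetP => z; rewrite !inE => /orP [] /eqP ->; rewrite ?aJ ?aI ?bJ ?(notI a b) ?orbT.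
have outJ : #|arcs F (I :\: J) :\: Jp| <= nedges_outside F J.
  apply: (card_arcs_le_edges (I := I) (Q := fun E => [disjoint E & J])) => -[a b].
  rewrite !inE /= disjoint_pair => /andP [bJ /andP [/andP [aJ aI] Fab]].
  by split; rewrite ?(notI a) ?aJ.
by rewrite -card_arcs -(cardsID Jp) leq_add.
Qed.

End ForestArcs.

Section LowerBound.
Variables (V : finType) (g : rel V).
Hypotheses (g_sym : symmetric g) (g_irr : irreflexive g) (g_acyc : acyclic g).

Lemma arcs_del_edge (A : {set V}) u v :
  v \notin A -> arcs g A \subset (u, v) |: arcs (del_edge g [set u; v]) A.
Proof.
move=> vA; apply/subsetP => -[a b]; rewrite !inE /= /del_edge => /andP [aA gab].
rewrite aA gab /=; have [e | _] := eqVneq [set a; b] [set u; v]; last by rewrite orbT.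
rewrite orbC /=.
have : a \in [set u; v] by rewrite -e set21.
rewrite !inE => /orP [] /eqP au; last by rewrite -au aA in vA.
have : b \in [set u; v] by rewrite -e set22.
rewrite !inE -au => /orP [] /eqP bE; first by rewrite bE g_irr in gab.
by rewrite bE.
Qed.

Lemma ind_vertex_cover_le_sigma_del_edge (I : {set V}) u v :
  ind_vertex_cover g I -> {in I, forall a, 1 < deg g a} -> u \in I -> g u v ->
  #|I| <= sigma (del_edge g [set u; v]).
Proof.
move=> /andP [/independentP Iind _] Ideg uI guv.
have vI : v \notin I by apply: contraL guv; apply: Iind.
set F := del_edge g [set u; v].
have FI : independent F I.
  by apply/independentP => a b aI bI; apply: contra (Iind a b aI bI); apply: del_edge_sub.
apply: le_sigma => J _.
have F_acyc : acyclic F by apply: del_edge_acyclic.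
have forest_bound := sum_deg_setD_le (del_edge_sym g_sym _) (del_edge_irr g_irr _) F_acyc J FI.
rewrite -/F in forest_bound.
have deg_bound : 2 * #|I :\: J| <= \sum_(a in I :\: J) deg F a + 1.
  have vIJ : v \notin I :\: J by apply: contra vI => /setDP [].
  apply: leq_trans (_ : _ <= #|(u, v) |: arcs F (I :\: J)|) _; last first.
    by rewrite cardsU1 card_arcs addnC leq_add2l leq_b1.
  apply: leq_trans (subset_leq_card (arcs_del_edge u vIJ)).
  by rewrite card_arcs mulnC -sum_nat_const; apply: leq_sum => a /setDP [aI _]; apply: Ideg.
have := cardsID J I; have := cardsID I J; rewrite setIC; lia.
Qed.

End LowerBound.

Unset Implicit Arguments.

Theorem proposition2p7 (V : finType) (g : rel V) (I : {set V}) :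
  is_tree g ->
  sigma g = tau_ind g ->
  min_ind_vertex_cover g I ->
  (exists A, critical g A) ->
  exists A : {set V},
    [/\ A \in edges g,
        (exists2 x, x \in A & (deg g x == 1) && (x \in I))
      & sigma (del_edge g A) + 1 <= sigma g].
Proof.
move=> [g_sym g_irr _ g_conn g_acyc] sigma_tau Imin [_ [/edgesP [x0 [y0 [gxy0 ->]]] crit]].
have sigmaI := sigma_min_ind_vertex_cover g_irr sigma_tau Imin.
have [Icov _] := Imin.
have [/exists_inP [x xI /eqP xleaf] | noleaf] := boolP [exists x in I, deg g x == 1].
  have [y gxy _] := deg1P xleaf.
  exists [set x; y]; split; first exact: edge_pair.
    by exists x; rewrite ?set21 ?xleaf ?xI.
  by rewrite sigmaI sigma_del_pendant_edge.
have [u [v [uI guv uvE]]] : exists u v, [/\ u \in I, g u v & [set x0; y0] = [set u; v]].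
  have /ind_vertex_coverP [_ /(_ _ _ gxy0) /orP [x0I | y0I]] := Icov; first by exists x0, y0.
  by exists y0, x0; rewrite g_sym setUC.
have Ideg : {in I, forall a, 1 < deg g a}.
  move=> a aI; have := connected_deg_gt0 a g_conn guv.
  by move/exists_inPn: noleaf => /(_ a aI); lia.
have := ind_vertex_cover_le_sigma_del_edge g_sym g_irr g_acyc Icov Ideg uI guv.
by move: crit; rewrite uvE sigmaI; lia.
Qed.
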